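(* Let $x^*\in\mathbb{R}^n$ satisfy $Ax^*=b$, let $\ell\ge1$ and let $x_1,\ldots,x_\ell\in\mathbb{R}^n$ be affinely independent with $x_\ell=\operatorname{argmin}_{\xi\in\operatorname{aff}(x_1,\ldots,x_\ell)}\|\xi-x^*\|^2$ and $P(x_\ell)\notin\operatorname{aff}(x_1,\ldots,x_\ell)$. Let $V=(x_1-x_\ell,\ldots,x_{\ell-1}-x_\ell)$, $M=(V,P(x_\ell)-x_\ell)$, $\gamma=\frac12(\|r(x_\ell)\|^2+\|P(x_\ell)-x_\ell\|^2)$, let $s^*\in\mathbb{R}^\ell$ be the unique solution of $M^TMs=\gamma e_\ell$ ($e_\ell$ the $\ell$-th unit vector of $\mathbb{R}^\ell$), and put $x_{\ell+1}=x_\ell+Ms^*$. Then \[\langle x_i-x_{\ell+1},x_j-x_{\ell+1}\rangle=(V^TV)_{ij}+\gamma s^*_\ell\quad(1\le i,j\le\ell-1),\] \[\langle x_i-x_{\ell+1},x_\ell-x_{\ell+1}\rangle=\gamma s^*_\ell\quad(1\le i\le\ell).\]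
   Context: Let $A=(a_1,\ldots,a_m)^T\in\mathbb{R}^{m\times n}$ with rows $a_j\in\mathbb{R}^n\setminus\{0\}$, and let $b\in\mathbb{R}^m$ lie in the range of $A$. Norms are Euclidean. For $j=1,\ldots,m$ define the projectors $P_j:\mathbb{R}^n\to\mathbb{R}^n$, $P_j(x)=\big(I-\frac{a_ja_j^T}{\|a_j\|^2}\big)x+\frac{b_j}{\|a_j\|^2}a_j$ (the orthogonal projection onto $\{z:a_j^Tz=b_j\}$), and the Kaczmarz cycle $P=P_m\circ\cdots\circ P_1$. The residual $r:\mathbb{R}^n\to\mathbb{R}^m$ is defined by $r_1(x)=(a_1^Tx-b_1)/\|a_1\|$ and $r_j(x)=(a_j^T(P_{j-1}\circ\cdots\circ P_1)(x)-b_j)/\|a_j\|$ for $j=2,\ldots,m$. $\operatorname{aff}(\cdot)$ denotes the affine hull. *)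

(* Vectors of R^n are column vectors 'cV[R]_n, R : rcfType
   (a real closed field, so that Num.sqrt is available). *)
From mathcomp Require Import all_boot all_order all_algebra.
Set Implicit Arguments. Unset Strict Implicit. Unset Printing Implicit Defensive.
Import Order.TTheory GRing.Theory Num.Theory.
Local Open Scope ring_scope.

Section Kaczmarz.
Variable R : rcfType.

Definition dot {n : nat} (u v : 'cV[R]_n) : R := \sum_(i < n) u i 0 * v i 0.
Definition norm {n : nat} (u : 'cV[R]_n) : R := Num.sqrt (dot u u).

Variables (m n : nat) (A : 'M[R]_(m, n)) (b : 'cV[R]_m).

Definition arow (j : 'I_m) : 'cV[R]_n := (row j A)^T.

Definition proj (j : 'I_m) (x : 'cV[R]_n) : 'cV[R]_n :=
  x - (dot (arow j) x / norm (arow j) ^+ 2) *: arow j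
    + (b j 0 / norm (arow j) ^+ 2) *: arow j.

(* Pit t x = (P_t o ... o P_1)(x)  (first t projectors, 1-indexed) *)
Definition Pit (t : nat) (x : 'cV[R]_n) : 'cV[R]_n :=
  foldl (fun y j => proj j y) x (take t (enum 'I_m)).

Definition Pcyc (x : 'cV[R]_n) : 'cV[R]_n := Pit m x.

(* residual r(x): r_j(x) = (a_j^T (P_{j-1} o ... o P_1)(x) - b_j)/||a_j|| *)
Definition resid (x : 'cV[R]_n) : 'cV[R]_m :=
  \col_(j < m) ((dot (arow j) (Pit j x) - b j 0) / norm (arow j)).

End Kaczmarz.

Definition aff (R : rcfType) (n l : nat) (x : 'I_l -> 'cV[R]_n) (y : 'cV[R]_n) : Prop :=
  exists c : 'I_l -> R, \sum_(i < l) c i = 1 /\ y = \sum_(i < l) c i *: x i.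

Definition aff_indep (R : rcfType) (n l : nat) (x : 'I_l -> 'cV[R]_n) : Prop :=
  forall c : 'I_l -> R, \sum_(i < l) c i = 0 -> \sum_(i < l) c i *: x i = 0 ->
    forall i, c i = 0.

From mathcomp Require Import all_boot all_order all_algebra.
From mathcomp Require Import ring.
Import Order.TTheory GRing.Theory Num.Theory.
Local Open Scope ring_scope.

(* Only the defining equation M^T M s = gamma e_l of s is needed: it says that
   the step w = M s is orthogonal to every column x_i - x_l of V and that
   <w, w> = s^T M^T M s = gamma s_l.  Moving the base point from x_l to
   x_{l+1} = x_l + w therefore adds exactly <w, w> to every inner product of
   differences. *)

Section Dot.
Variables (R : rcfType) (n : nat).
Implicit Types u v w : 'cV[R]_n.

Lemma dotC u v : dot u v = dot v u.
Proof. by apply: eq_bigr => i _; rewrite mulrC. Qed.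

Lemma dotBl u v w : dot (u - v) w = dot u w - dot v w.
Proof. by rewrite /dot -sumrB; apply: eq_bigr => i _; rewrite !mxE mulrBl. Qed.

Lemma dotBr u v w : dot w (u - v) = dot w u - dot w v.
Proof. by rewrite dotC dotBl !(dotC w). Qed.

Lemma dot0l u : dot 0 u = 0.
Proof. by rewrite /dot big1 // => i _; rewrite mxE mul0r. Qed.

Lemma dotE u v : dot u v = (u^T *m v) 0 0.
Proof. by rewrite mxE; apply: eq_bigr => i _; rewrite mxE. Qed.

Lemma dot_shift_orth u v y w :
  dot (u - y) w = 0 -> dot (v - y) w = 0 ->
  dot (u - (y + w)) (v - (y + w)) = dot (u - y) (v - y) + dot w w.
Proof.
move=> uw vw; rewrite !opprD !addrA.
move: (u - y) (v - y) uw vw => u' v' uw vw.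
rewrite !dotBl !dotBr uw (dotC w v') vw; ring.
Qed.

End Dot.

Lemma mulmx_tr_dot (R : rcfType) (n p q : nat) (M : 'M[R]_(n, p)) (N : 'M[R]_(n, q)) i j :
  (M^T *m N) i j = dot (col i M) (col j N).
Proof. by rewrite mxE; apply: eq_bigr => a _; rewrite !mxE. Qed.

Section GramSolution.
Context {R : rcfType} {n p : nat} {M : 'M[R]_(n, p)} {s : 'cV[R]_p}.
Context {g : R} {q : 'I_p}.
Hypothesis hs : (M^T *m M) *m s = g *: delta_mx q 0.

Lemma gram_solution_dot_col j : dot (col j M) (M *m s) = g * (j == q)%:R.
Proof.
have := congr1 (fun N : 'cV_p => N j 0) hs; rewrite -mulmxA mulmx_tr_dot /=.
rewrite !mxE eqxx andbT => <-; congr dot.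
by apply/matrixP => a c; rewrite (ord1 c) [RHS]mxE.
Qed.

Lemma gram_solution_dot_self : dot (M *m s) (M *m s) = g * s q 0.
Proof.
rewrite dotE trmx_mul -mulmxA (mulmxA M^T) hs mxE (bigD1 q) //= big1 ?addr0.
  by rewrite !mxE eqxx mulr1 mulrC.
by move=> j /negbTE jq; rewrite !mxE jq mulr0 mulr0.
Qed.

End GramSolution.

Theorem lemma11 (R : rcfType) (m n k : nat) (A : 'M[R]_(m, n)) (b : 'cV[R]_m)
  (hrows : forall j : 'I_m, row j A != 0)
  (hb : exists z : 'cV[R]_n, A *m z = b)
  (xstar : 'cV[R]_n) (hxstar : A *m xstar = b)
  (x : 'I_k.+1 -> 'cV[R]_n)
  (hind : aff_indep x)
  (hmin : aff x (x ord_max) /\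
          forall xi, aff x xi -> norm (x ord_max - xstar) ^+ 2 <= norm (xi - xstar) ^+ 2)
  (hP : ~ aff x (Pcyc A b (x ord_max)))
  (V : 'M[R]_(n, k))
  (hV : V = \matrix_(i < n, j < k) (x (widen_ord (leqnSn k) j) - x ord_max) i 0)
  (M : 'M[R]_(n, k.+1))
  (hM : M = \matrix_(i < n, j < k.+1)
              (if j == ord_max then (Pcyc A b (x ord_max) - x ord_max) i 0
               else (x j - x ord_max) i 0))
  (gamma : R)
  (hgamma : gamma = 2^-1 * (norm (resid A b (x ord_max)) ^+ 2
                            + norm (Pcyc A b (x ord_max) - x ord_max) ^+ 2))
  (s : 'cV[R]_k.+1)
  (hs : (M^T *m M) *m s = gamma *: delta_mx ord_max 0)
  (xnew : 'cV[R]_n) (hxnew : xnew = x ord_max + M *m s) :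
  (forall i j : 'I_k,
     dot (x (widen_ord (leqnSn k) i) - xnew) (x (widen_ord (leqnSn k) j) - xnew)
     = (V^T *m V) i j + gamma * s ord_max 0)
  /\ (forall i : 'I_k.+1,
     dot (x i - xnew) (x ord_max - xnew) = gamma * s ord_max 0).
Proof.
have colM j : j != ord_max -> col j M = x j - x ord_max.
  by move=> /negbTE jmax; apply/matrixP => a c; rewrite (ord1 c) hM !mxE jmax.
have orth i : dot (x i - x ord_max) (M *m s) = 0.
  have [-> | imax] := eqVneq i ord_max; first by rewrite subrr dot0l.
  by rewrite -colM // (gram_solution_dot_col hs) (negbTE imax) mulr0.
have shift i j : dot (x i - xnew) (x j - xnew)
                 = dot (x i - x ord_max) (x j - x ord_max) + gamma * s ord_max 0.
  by rewrite hxnew dot_shift_orth // (gram_solution_dot_self hs).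
split=> [i j | i]; rewrite shift; last by rewrite subrr dotC dot0l add0r.
rewrite mulmx_tr_dot; congr (dot _ _ + _); apply/matrixP => a c;
  by rewrite (ord1 c) hV !mxE.
Qed.
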